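(* Let $A\in\mathbb{R}^{n\times n}$, $1\le K<n$, $\lambda>0$, and $g\in\mathcal{G}$ with Lipschitz constant $\ell>0$ for $g'$, and set $\rho=3\lambda\ell$. For the ADMM iterates $\{(X_k,Y_k,\Lambda_k)\}$ described in the context (arbitrary initialization), for every $k\ge 1$, $$\mathcal{L}_\rho(X_k,Y_k,\Lambda_k)-\mathcal{L}_\rho(X_{k+1},Y_{k+1},\Lambda_{k+1})\ge \frac{7\ell\lambda}{6}\|Y_{k+1}-Y_k\|_F^2 .$$
   Context: $\mathcal{P}_K$ denotes the set of real symmetric $n\times n$ matrices $X$ with $X^2=X$ and $\mathrm{rank}(X)=K$. $\mathcal{G}$ is the class of functions $g:\mathbb{R}\to\mathbb{R}$ that are continuously differentiable, nonnegative, convex, and satisfy $|g'(x_1)-g'(x_2)|\le \ell|x_1-x_2|$ for all $x_1,x_2$. $\langle M,N\rangle=\mathrm{trace}(M^TN)$, $\|\cdot\|_F$ is the Frobenius norm. The augmented Lagrangian is $\mathcal{L}_\rho(X,Y,\Lambda)=\|A-X\|_F^2+\lambda\sum_{i,j}g(Y_{ij})+\frac{\rho}{2}\|X-Y\|_F^2+\langle\Lambda,X-Y\rangle$. The ADMM iteration is: $X_{k+1}\in\arg\min_{X\in\mathcal{P}_K}\mathcal{L}_\rho(X,Y_k,\Lambda_k)$; $Y_{k+1}=\arg\min_{Y\in\mathbb{R}^{n\times n}}\mathcal{L}_\rho(X_{k+1},Y,\Lambda_k)$; $\Lambda_{k+1}=\Lambda_k+\rho(X_{k+1}-Y_{k+1})$.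 *)

From mathcomp Require Import all_boot all_algebra.
From mathcomp Require Import all_classical all_reals all_analysis.
Set Implicit Arguments. Unset Strict Implicit. Unset Printing Implicit Defensive.
Import GRing.Theory Num.Theory.
Import numFieldNormedType.Exports.
Local Open Scope ring_scope.

Definition frob2 (R : realType) (n : nat) (M : 'M[R]_n) : R :=
  \sum_(i < n) \sum_(j < n) (M i j) ^+ 2.

Definition minner (R : realType) (n : nat) (M N : 'M[R]_n) : R :=
  \tr (M^T *m N).

Definition in_PK (R : realType) (n K : nat) (X : 'M[R]_n) : Prop :=
  X^T = X /\ X *m X = X /\ \rank X = K.

Definition classG (R : realType) (g : R -> R) (ell : R) : Prop :=
  (forall x : R, derivable g x 1) /\
  (forall x : R, {for x, continuous (derive1 g)}) /\
  (forall x : R, 0 <= g x) /\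
  (forall (x y t : R), 0 <= t <= 1 ->
      g (t * x + (1 - t) * y) <= t * g x + (1 - t) * g y) /\
  (forall x1 x2 : R, `| (derive1 g) x1 - (derive1 g) x2 | <= ell * `| x1 - x2 |).

Definition Lagr (R : realType) (n : nat) (A : 'M[R]_n) (lam : R) (g : R -> R)
  (rho : R) (X Y L : 'M[R]_n) : R :=
  frob2 (A - X) + lam * (\sum_(i < n) \sum_(j < n) g (Y i j))
  + rho / 2 * frob2 (X - Y) + minner L (X - Y).

From mathcomp Require Import all_boot all_algebra.
From mathcomp Require Import all_classical all_reals all_analysis.
From mathcomp Require Import ring lra.
Import order.Order.TTheory GRing.Theory Num.Theory numFieldNormedType.Exports.
Set Implicit Arguments.
Unset Strict Implicit.

Local Open Scope ring_scope.

(* The Lagrangian is separable over the entries of Y, and each entry of the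
   Y-update minimizes the strongly convex scalar function
   phi(y) = lam g(y) + rho/2 (x - y)^2 + l (x - y).
   Optimality, lam g'(Y_(k+1)) = Lam_(k+1), turns the multiplier update into a
   Lipschitz image of the Y-update: |Lam_(k+1) - Lam_k| <= lam ell |Y_(k+1) - Y_k|.
   Hence the multiplier step raises L by at most (lam ell)^2/rho |dY|^2
   = lam ell/3 |dY|^2, the Y-step lowers it by at least rho/2 |dY|^2
   = 3 lam ell/2 |dY|^2, and the X-step does not raise it; 3/2 - 1/3 = 7/6. *)

Lemma is_derive0_global_min (R : realFieldType) (f : R -> R) (c : R) :
  (forall t, derivable f t 1) -> (forall t, f c <= f t) -> is_derive c 1 f 0.
Proof.
move=> df cmin; apply: (@derive1_at_min _ f (c - 1) (c + 1)) => //.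
- by rewrite lerD2l; lra.
- by rewrite in_itv /=; apply/andP; split; lra.
Qed.

Lemma le_of_forall_mul1B (R : realFieldType) (a c : R) :
  (forall t, 0 < t -> t <= 1 -> c * (1 - t) <= a) -> c <= a.
Proof.
move=> H; have a_ge0 : 0 <= a by have := H 1 ltr01 (lexx 1); rewrite subrr mulr0.
have [//|a_lt_c] := lerP c a.
have c_gt0 : 0 < c by lra.
have t_gt0 : 0 < (c - a) / (2 * c) by apply: divr_gt0; lra.
have t_le1 : (c - a) / (2 * c) <= 1 by rewrite ler_pdivrMr; lra.
have := H _ t_gt0 t_le1.
have -> : c * (1 - (c - a) / (2 * c)) = (c + a) / 2 by field; lra.
lra.
Qed.

Section YSubproblem.
Variables (R : realType) (g : R -> R) (lam rho : R).

Definition ysub_obj (x l y : R) : R :=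
  lam * g y + rho / 2 * (x - y) ^+ 2 + l * (x - y).

Hypothesis g_derivable : forall t, derivable g t 1.

Lemma is_derive_ysub_obj (x l y : R) :
  is_derive y 1 (ysub_obj x l) (lam * derive1 g y - rho * (x - y) - l).
Proof.
have : is_derive y 1 g (derive1 g y) by rewrite derive1E; exact: derivableP.
by move=> dg; apply: is_derive_eq; rewrite /GRing.scale /=; field.
Qed.

Lemma ysub_obj_min_derive (x l y : R) :
  (forall s, ysub_obj x l y <= ysub_obj x l s) ->
  lam * derive1 g y = l + rho * (x - y).
Proof.
move=> ymin.
have dphi0 : is_derive y 1 (ysub_obj x l) 0.
  apply: is_derive0_global_min => // t.
  by have ? := is_derive_ysub_obj x l t; exact: ex_derive.
have := @derive_val _ _ _ _ _ _ _ (is_derive_ysub_obj x l y).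
rewrite (@derive_val _ _ _ _ _ _ _ dphi0); lra.
Qed.

Hypothesis g_convex : forall (x y t : R), 0 <= t <= 1 ->
  g (t * x + (1 - t) * y) <= t * g x + (1 - t) * g y.

(* Strong convexity with modulus rho, from the convexity of g alone. *)
Lemma ysub_obj_growth (x l y z : R) : 0 <= lam ->
  (forall s, ysub_obj x l y <= ysub_obj x l s) ->
  rho / 2 * (z - y) ^+ 2 <= ysub_obj x l z - ysub_obj x l y.
Proof.
move=> lam_ge0 ymin; apply: le_of_forall_mul1B => t t_gt0 t_le1.
set yt := t * z + (1 - t) * y.
have gyt : lam * g yt <= lam * (t * g z + (1 - t) * g y).
  by apply: ler_wpM2l => //; apply: g_convex; apply/andP; split; lra.
have chord : ysub_obj x l yt + t * (1 - t) * (rho / 2 * (z - y) ^+ 2)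
    <= t * ysub_obj x l z + (1 - t) * ysub_obj x l y.
  have -> : t * ysub_obj x l z + (1 - t) * ysub_obj x l y
      = ysub_obj x l yt + t * (1 - t) * (rho / 2 * (z - y) ^+ 2)
        + (lam * (t * g z + (1 - t) * g y) - lam * g yt).
    by rewrite /ysub_obj /yt; ring.
  lra.
rewrite -(ler_pM2l t_gt0); have := ymin yt; lra.
Qed.

Variables (ell : R).
Hypotheses (lam_gt0 : 0 < lam) (ell_gt0 : 0 < ell) (rho_def : rho = 3 * lam * ell).
Hypothesis g'_lipschitz : forall x1 x2 : R,
  `| derive1 g x1 - derive1 g x2 | <= ell * `| x1 - x2 |.

Lemma ysub_obj_descent (x1 y0 y1 l0 l1 : R) :
  lam * derive1 g y0 = l0 ->
  (forall s, ysub_obj x1 l0 y1 <= ysub_obj x1 l0 s) ->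
  l1 = l0 + rho * (x1 - y1) ->
  7 * ell * lam / 6 * (y1 - y0) ^+ 2 <= ysub_obj x1 l0 y0 - ysub_obj x1 l1 y1.
Proof.
move=> dual0 y1min l1_def.
have rho_gt0 : 0 < rho by rewrite rho_def !mulr_gt0.
have dual1 : lam * derive1 g y1 = l1 by rewrite l1_def; exact: ysub_obj_min_derive.
have y_step := ysub_obj_growth y0 (ltW lam_gt0) y1min.
have l_step : ysub_obj x1 l1 y1 - ysub_obj x1 l0 y1 = (l1 - l0) ^+ 2 / rho.
  by rewrite /ysub_obj l1_def; field; lra.
have l_jump : (l1 - l0) ^+ 2 <= (lam * ell) ^+ 2 * (y1 - y0) ^+ 2.
  have -> : l1 - l0 = lam * (derive1 g y1 - derive1 g y0) by rewrite mulrBr dual0 dual1.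
  rewrite !exprMn -[X in _ <= X]mulrA; apply: ler_wpM2l; first exact: sqr_ge0.
  rewrite -real_normK ?num_real // -[(y1 - y0) ^+ 2]real_normK ?num_real // -exprMn.
  by rewrite ler_sqr ?nnegrE ?normr_ge0 ?mulr_ge0 ?(ltW ell_gt0) ?g'_lipschitz.
have l_step_le : (l1 - l0) ^+ 2 / rho <= lam * ell / 3 * (y1 - y0) ^+ 2.
  rewrite ler_pdivrMr // rho_def.
  by have -> : lam * ell / 3 * (y1 - y0) ^+ 2 * (3 * lam * ell)
      = (lam * ell) ^+ 2 * (y1 - y0) ^+ 2 by field.
rewrite -opprB sqrrN rho_def in y_step.
have -> : 7 * ell * lam / 6 * (y1 - y0) ^+ 2
    = 3 * lam * ell / 2 * (y1 - y0) ^+ 2 - lam * ell / 3 * (y1 - y0) ^+ 2 by field.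
lra.
Qed.

End YSubproblem.

Section Separability.
Variables (R : realType) (n : nat).
Implicit Types (M X Y Z L : 'M[R]_n).

Lemma minnerE L M : minner L M = \sum_(i < n) \sum_(j < n) L i j * M i j.
Proof.
rewrite /minner /mxtrace exchange_big /=.
by apply: eq_bigr => j _; rewrite mxE; apply: eq_bigr => i _; rewrite !mxE.
Qed.

Variables (A : 'M[R]_n) (lam : R) (g : R -> R) (rho : R).

Lemma LagrE X Y L : Lagr A lam g rho X Y L =
  \sum_(p : 'I_n * 'I_n) ((A p.1 p.2 - X p.1 p.2) ^+ 2 +
                          ysub_obj g lam rho (X p.1 p.2) (L p.1 p.2) (Y p.1 p.2)).
Proof.
rewrite /Lagr /frob2 minnerE !pair_bigA !mulr_sumr -!big_split /=.
by apply: eq_bigr => p _; rewrite /ysub_obj !mxE; ring.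
Qed.

Lemma Lagr_min_entry X Y L (p : 'I_n * 'I_n) :
  (forall Z, Lagr A lam g rho X Y L <= Lagr A lam g rho X Z L) ->
  forall s, ysub_obj g lam rho (X p.1 p.2) (L p.1 p.2) (Y p.1 p.2)
         <= ysub_obj g lam rho (X p.1 p.2) (L p.1 p.2) s.
Proof.
move=> Ymin s.
pose Z := \matrix_(i, j) if (i, j) == p then s else Y i j.
have := Ymin Z; rewrite !LagrE (bigD1 p) //= [X in _ <= X](bigD1 p) //=.
under [X in _ <= _ + X]eq_bigr => q qp do rewrite mxE -surjective_pairing (negbTE qp).
by rewrite mxE -surjective_pairing eqxx lerD2r lerD2l.
Qed.

End Separability.

Theorem lemma2 (R : realType) (n K : nat) (A : 'M[R]_n) (lam ell rho : R)
  (g : R -> R) (X Y Lam : nat -> 'M[R]_n) :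
  (1 <= K)%N -> (K < n)%N -> 0 < lam -> 0 < ell -> classG g ell ->
  rho = 3 * lam * ell ->
  (* X-update: X_{k+1} is a minimizer of L_rho(., Y_k, Lam_k) over P_K *)
  (forall k : nat, in_PK K (X k.+1) /\
     (forall Z : 'M[R]_n, in_PK K Z ->
        Lagr A lam g rho (X k.+1) (Y k) (Lam k) <= Lagr A lam g rho Z (Y k) (Lam k))) ->
  (* Y-update: Y_{k+1} minimizes L_rho(X_{k+1}, ., Lam_k) over all matrices *)
  (forall (k : nat) (Z : 'M[R]_n),
     Lagr A lam g rho (X k.+1) (Y k.+1) (Lam k) <= Lagr A lam g rho (X k.+1) Z (Lam k)) ->
  (* multiplier update *)
  (forall k : nat, Lam k.+1 = Lam k + rho *: (X k.+1 - Y k.+1)) ->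
  forall k : nat, (1 <= k)%N ->
    Lagr A lam g rho (X k) (Y k) (Lam k) - Lagr A lam g rho (X k.+1) (Y k.+1) (Lam k.+1)
    >= 7 * ell * lam / 6 * frob2 (Y k.+1 - Y k).
Proof.
move=> _ _ lam_gt0 ell_gt0 [g_der [_ [_ [g_convex g'_lip]]]] rho_def Xmin Ymin Lam_def.
case=> [//|k] _.
(* X_(k+2) is compared with the feasible point X_(k+1), hence k >= 1. *)
have X_step := (Xmin k.+1).2 _ (Xmin k).1.
suff : 7 * ell * lam / 6 * frob2 (Y k.+2 - Y k.+1) <=
    Lagr A lam g rho (X k.+2) (Y k.+1) (Lam k.+1)
    - Lagr A lam g rho (X k.+2) (Y k.+2) (Lam k.+2) by lra.
rewrite !LagrE /frob2 pair_bigA -sumrB mulr_sumr; apply: ler_sum => p _.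
rewrite opprD addrACA subrr add0r !mxE; apply: ysub_obj_descent => //.
- rewrite Lam_def !mxE; apply: ysub_obj_min_derive => //; exact: Lagr_min_entry (Ymin k).
- exact: Lagr_min_entry (Ymin k.+1).
- by rewrite Lam_def !mxE.
Qed.
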